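(* Let $\mathit{HWQ}$ be the Herlihy\&Wing queue described in the context, with the dequeue linearization point $lin(deq,d,k)$ emitted exactly when a dequeue $k$ executes a $\mathtt{swap}$ returning a non-null value $d$. Then there exists a $(C\cup R\cup Lin(deq))$-forward simulation from $\mathit{HWQ}$ to $AbsQ$; consequently $\mathit{HWQ}$ is a $(C\cup R\cup Lin(deq))$-refinement of $AbsQ_0$, and in particular refines (is linearizable with respect to) $AbsQ_0$.
   Context: $\mathit{HWQ}$ is the queue implementation (methods $enq$, $deq$; values $\mathbb{N}\cup\{\mathtt{EMPTY}\}$, no value enqueued twice) whose shared state is an unbounded array $\mathtt{items}$ (all entries initially $\mathtt{null}$) and an integer counter $\mathtt{back}$ (initially $0$), executed by arbitrarily many concurrent operations, each statement being atomic. $enq(x)$: $\mathtt{i} := \mathtt{back}$; $\mathtt{back}:=\mathtt{back}+1$ (one atomic step); then $\mathtt{items[i]} := x$; return. $deq()$: repeat forever: $\mathtt{range}:=\mathtt{back}-1$; for $\mathtt{i}=0,\dots,\mathtt{range}$: $\mathtt{x}:=\mathtt{swap}(\mathtt{items[i]},\mathtt{null})$ (atomically read $\mathtt{items[i]}$ into $\mathtt{x}$ and set it to $\mathtt{null}$); if $\mathtt{x}\ne\mathtt{null}$ return $\mathtt{x}$. It is viewed as an LTS whose labels are call/return actions, $lin(deq,d,k)$ actions as stated, and internal (non-observable) actions for all other steps. Call actions $inv(m,d,k)$ and return actions $ret(m,d,k)$ form sets $C,R$; $Lin(deq)=\{lin(deq,d,k)\}$; traces of an LTS are label sequences of finite executions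 from the initial state and $Tr(A)|\Gamma$ their projections onto $\Gamma$. A $\Gamma$-refinement of $L_2$ by $L_1$ means $Tr(L_1)|\Gamma\subseteq Tr(L_2)|\Gamma$; refinement means $H(L_1)\subseteq H(L_2)$ with $H$ the projections of traces onto $C\cup R$. A $\Gamma$-forward simulation from $L_1$ to $L_2$ (with $C\cup R\subseteq\Gamma\subseteq\Sigma_1\cap\Sigma_2$) is a relation $fs$ between states with $fs[s^1_0]=\{s^2_0\}$ such that every $L_1$-step $s\xrightarrow{\gamma}s'$ with $\gamma\in\Gamma$ and $u\in fs[s]$ is matched by $u\xrightarrow{\sigma}u'$ with $u'\in fs[s']$, $\sigma$ containing $\gamma$ exactly once and otherwise only labels in $\Sigma_2\setminus\Gamma$; and every step with label $e\notin\Gamma$ is matched by $u\xrightarrow{\sigma}u'$, $u'\in fs[s']$, $\sigma\in(\Sigma_2\setminus\Gamma)^*$. $AbsQ_0$: states $(\sigma,in,rv,cp)$; $inv(enq,d,k)$: $in(k)=d,cp(k)=A_1$; $lin(enq,d,k)$ ($cp(k)=A_1$, $in(k)=d$): $\sigma:=d\cdot\sigma$, $cp(k)=A$; $ret(enq,k)$ ($cp(k)=A$): $cp(k)=A_2$; $inv(deq,k)$: $cp(k)=R_1$; $lin(deq,d,k)$ ($cp(k)=R_1$, $\sigma=\sigma'\cdot d$): $\sigma:=\sigma'$, $rv(k)=d$, $cp(k)=R_2$; $lin(deq,\mathtt{EMPTY},k)$ ($cp(k)=R_1,\sigma=\epsilon$): $rv(k)=\mathtt{EMPTY}$, $cp(k)=R_2$;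 $ret(deq,d,k)$ ($cp(k)=R_2,rv(k)=d$): $cp(k)=R_3$; calls require $k\notin dom(cp)$ and enqueued values $\ne\mathtt{EMPTY}$. $AbsQ$: alphabet $C\cup R\cup Lin(deq)$; states $(O,<,\ell,rv,cp)$, $O\subseteq\mathbb{N}$, $<$ strict partial order on $O$, $\ell:O\to\mathit{Vals}\times\{\mathtt{PEND},\mathtt{COMP}\}$, $rv,cp$ partial functions; initially all empty. $inv(enq,d,k)$ ($k\notin dom(cp)$, $d\ne\mathtt{EMPTY}$): add $k$ to $O$ ordered after every $k''\in O$ with $\ell_2(k'')=\mathtt{COMP}$, $\ell(k)=(d,\mathtt{PEND})$, $cp(k)=A_1$; $ret(enq,k)$ ($cp(k)=A_1$): if $k\in O$ change its flag to $\mathtt{COMP}$; set $cp(k)=A_2$; $inv(deq,k)$: $cp(k)=R_1$; $lin(deq,d,k)$ ($cp(k)=R_1$, $d\ne\mathtt{EMPTY}$, some $<$-minimal $k'\in O$ has $\ell_1(k')=d$): remove $k'$ from $O$ and from $<$, $rv(k)=d$, $cp(k)=R_2$; $lin(deq,\mathtt{EMPTY},k)$ ($cp(k)=R_1$, every $o\in O$ flagged $\mathtt{PEND}$): $rv(k)=\mathtt{EMPTY}$, $cp(k)=R_2$; $ret(deq,d,k)$ ($cp(k)=R_2$, $rv(k)=d$): $cp(k)=R_3$. *)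

From Stdlib Require Import List Arith Bool.
Import ListNotations.

Inductive val : Type := VNat (n : nat) | EMPTY.

Inductive label : Type :=
| InvEnq (d : val) (k : nat)
| InvDeq (k : nat)
| RetEnq (k : nat)
| RetDeq (d : val) (k : nat)
| LinEnq (d : val) (k : nat)
| LinDeq (d : val) (k : nat)
| Tau.

Definition isC (l : label) : bool :=
  match l with InvEnq _ _ | InvDeq _ => true | _ => false end.
Definition isR (l : label) : bool :=
  match l with RetEnq _ | RetDeq _ _ => true | _ => false end.
Definition isCR (l : label) : bool := isC l || isR l.
Definition isLinDeq (l : label) : bool :=
  match l with LinDeq _ _ => true | _ => false end.
Definition isLinEnq (l : label) : bool :=
  match l with LinEnq _ _ => true | _ => false end.

Definition GammaCRL (l : label) : bool := isCR l || isLinDeq l.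

Record LTS : Type := {
  St : Type;
  init : St;
  step : St -> label -> St -> Prop;
  alpha : label -> bool
}.

Inductive steps (L : LTS) : St L -> list label -> St L -> Prop :=
| steps_nil : forall s, steps L s [] s
| steps_cons : forall s l s1 sig s2,
    step L s l s1 -> steps L s1 sig s2 -> steps L s (l :: sig) s2.

Definition trace (L : LTS) (t : list label) : Prop :=
  exists s, steps L (init L) t s.

Definition Gamma_refines (G : label -> bool) (L1 L2 : LTS) : Prop :=
  forall t, trace L1 t -> exists t', trace L2 t' /\ filter G t = filter G t'.

Definition refines (L1 L2 : LTS) : Prop :=
  forall t, trace L1 t -> exists t', trace L2 t' /\ filter isCR t = filter isCR t'.

Definition fwd_sim (G : label -> bool) (L1 L2 : LTS)
    (fs : St L1 -> St L2 -> Prop) : Prop :=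
  (forall l, isCR l = true -> G l = true) /\
  (forall l, G l = true -> alpha L1 l = true /\ alpha L2 l = true) /\
  (forall u, fs (init L1) u <-> u = init L2) /\
  (forall s g s' u, step L1 s g s' -> G g = true -> fs s u ->
     exists sig1 sig2 u',
       forallb (fun l => alpha L2 l && negb (G l)) sig1 = true /\
       forallb (fun l => alpha L2 l && negb (G l)) sig2 = true /\
       steps L2 u (sig1 ++ g :: sig2) u' /\ fs s' u') /\
  (forall s e s' u, step L1 s e s' -> G e = false -> fs s u ->
     exists sig u',
       forallb (fun l => alpha L2 l && negb (G l)) sig = true /\
       steps L2 u sig u' /\ fs s' u').

Definition upd {A : Type} (f : nat -> A) (k : nat) (v : A) : nat -> A :=
  fun o => if Nat.eqb o k then v else f o.

Inductive hloc : Type :=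
| HE1 (x : nat)
| HE2 (x : nat) (i : nat)
| HE3 (x : nat)
| HE4 (x : nat)
| HD1
| HD2 (n : nat) (i : nat)  (* deq in the for loop, range = n - 1, next index i *)
| HD3 (x : nat)
| HD4 (x : nat).

Definition enq_value (h : hloc) : option nat :=
  match h with
  | HE1 x | HE2 x _ | HE3 x | HE4 x => Some x
  | _ => None
  end.

Record hstate : Type := {
  items : nat -> option nat;
  back : nat;
  hloc_of : nat -> option hloc
}.

Definition hinit : hstate :=
  {| items := fun _ => None; back := 0; hloc_of := fun _ => None |}.

Inductive hstep : hstate -> label -> hstate -> Prop :=
| h_inv_enq : forall it b lc x k,
    lc k = None ->
    (* no value is enqueued twice *)
    (forall k' h, lc k' = Some h -> enq_value h <> Some x) ->
    hstep {| items := it; back := b; hloc_of := lc |} (InvEnq (VNat x) k)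
          {| items := it; back := b; hloc_of := upd lc k (Some (HE1 x)) |}
| h_enq_fai : forall it b lc x k,
    lc k = Some (HE1 x) ->
    hstep {| items := it; back := b; hloc_of := lc |} Tau
          {| items := it; back := b + 1; hloc_of := upd lc k (Some (HE2 x b)) |}
| h_enq_write : forall it b lc x i k,
    lc k = Some (HE2 x i) ->
    hstep {| items := it; back := b; hloc_of := lc |} Tau
          {| items := upd it i (Some x); back := b; hloc_of := upd lc k (Some (HE3 x)) |}
| h_ret_enq : forall it b lc x k,
    lc k = Some (HE3 x) ->
    hstep {| items := it; back := b; hloc_of := lc |} (RetEnq k)
          {| items := it; back := b; hloc_of := upd lc k (Some (HE4 x)) |}
| h_inv_deq : forall it b lc k,
    lc k = None ->
    hstep {| items := it; back := b; hloc_of := lc |} (InvDeq k)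
          {| items := it; back := b; hloc_of := upd lc k (Some HD1) |}
| h_deq_range : forall it b lc k,
    lc k = Some HD1 ->
    hstep {| items := it; back := b; hloc_of := lc |} Tau
          {| items := it; back := b; hloc_of := upd lc k (Some (HD2 b 0)) |}
| h_deq_swap_null : forall it b lc n i k,
    lc k = Some (HD2 n i) -> i < n -> it i = None ->
    hstep {| items := it; back := b; hloc_of := lc |} Tau
          {| items := upd it i None; back := b; hloc_of := upd lc k (Some (HD2 n (S i))) |}
| h_deq_swap_val : forall it b lc n i x k,
    lc k = Some (HD2 n i) -> i < n -> it i = Some x ->
    hstep {| items := it; back := b; hloc_of := lc |} (LinDeq (VNat x) k)
          {| items := upd it i None; back := b; hloc_of := upd lc k (Some (HD3 x)) |}
| h_deq_restart : forall it b lc n i k,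
    lc k = Some (HD2 n i) -> n <= i ->
    hstep {| items := it; back := b; hloc_of := lc |} Tau
          {| items := it; back := b; hloc_of := upd lc k (Some HD1) |}
| h_ret_deq : forall it b lc x k,
    lc k = Some (HD3 x) ->
    hstep {| items := it; back := b; hloc_of := lc |} (RetDeq (VNat x) k)
          {| items := it; back := b; hloc_of := upd lc k (Some (HD4 x)) |}.

Definition HWQ : LTS :=
  {| St := hstate; init := hinit; step := hstep;
     alpha := fun l => isCR l || isLinDeq l || match l with Tau => true | _ => false end |}.

Inductive cpc : Type := A1 | A | A2 | R1 | R2 | R3.


Inductive flag : Type := PEND | COMP.

Record astate : Type := {
  aO : nat -> bool;
  alt : nat -> nat -> Prop;
  alab : nat -> val * flag;         (* ℓ (meaningful on O) *)
  arv : nat -> option val;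
  acp : nat -> option cpc
}.

Definition ainit : astate :=
  {| aO := fun _ => false; alt := fun _ _ => False; alab := fun _ => (EMPTY, PEND);
     arv := fun _ => None; acp := fun _ => None |}.

Inductive astep : astate -> label -> astate -> Prop :=
| a_inv_enq : forall O lt lab rv cp d k,
    cp k = None -> d <> EMPTY ->
    astep {| aO := O; alt := lt; alab := lab; arv := rv; acp := cp |} (InvEnq d k)
          {| aO := upd O k true;
             alt := fun a b => lt a b \/ (b = k /\ O a = true /\ snd (lab a) = COMP);
             alab := upd lab k (d, PEND); arv := rv; acp := upd cp k (Some A1) |}
| a_ret_enq : forall O lt lab rv cp k,
    cp k = Some A1 ->
    astep {| aO := O; alt := lt; alab := lab; arv := rv; acp := cp |} (RetEnq k)
          {| aO := O; alt := lt;
             alab := if O k then upd lab k (fst (lab k), COMP) else lab;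
             arv := rv; acp := upd cp k (Some A2) |}
| a_inv_deq : forall O lt lab rv cp k,
    cp k = None ->
    astep {| aO := O; alt := lt; alab := lab; arv := rv; acp := cp |} (InvDeq k)
          {| aO := O; alt := lt; alab := lab; arv := rv; acp := upd cp k (Some R1) |}
| a_lin_deq : forall O lt lab rv cp d k k',
    cp k = Some R1 -> d <> EMPTY ->
    O k' = true -> (forall o, O o = true -> ~ lt o k') -> fst (lab k') = d ->
    astep {| aO := O; alt := lt; alab := lab; arv := rv; acp := cp |} (LinDeq d k)
          {| aO := upd O k' false;
             alt := fun a b => lt a b /\ a <> k' /\ b <> k';
             alab := lab; arv := upd rv k (Some d); acp := upd cp k (Some R2) |}
| a_lin_deq_empty : forall O lt lab rv cp k,
    cp k = Some R1 ->
    (forall o, O o = true -> snd (lab o) = PEND) ->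
    astep {| aO := O; alt := lt; alab := lab; arv := rv; acp := cp |} (LinDeq EMPTY k)
          {| aO := O; alt := lt; alab := lab;
             arv := upd rv k (Some EMPTY); acp := upd cp k (Some R2) |}
| a_ret_deq : forall O lt lab rv cp d k,
    cp k = Some R2 -> rv k = Some d ->
    astep {| aO := O; alt := lt; alab := lab; arv := rv; acp := cp |} (RetDeq d k)
          {| aO := O; alt := lt; alab := lab; arv := rv; acp := upd cp k (Some R3) |}.

Definition AbsQ : LTS :=
  {| St := astate; init := ainit; step := astep;
     alpha := fun l => isCR l || isLinDeq l |}.

Record qstate : Type := {
  qsig : list val;          (* σ; enqueue prepends, dequeue removes the last element *)
  qin : nat -> option val;
  qrv : nat -> option val;
  qcp : nat -> option cpc
}.

Definition qinit : qstate :=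
  {| qsig := []; qin := fun _ => None; qrv := fun _ => None; qcp := fun _ => None |}.

Inductive qstep : qstate -> label -> qstate -> Prop :=
| q_inv_enq : forall s i rv cp d k,
    cp k = None -> d <> EMPTY ->
    qstep {| qsig := s; qin := i; qrv := rv; qcp := cp |} (InvEnq d k)
          {| qsig := s; qin := upd i k (Some d); qrv := rv; qcp := upd cp k (Some A1) |}
| q_lin_enq : forall s i rv cp d k,
    cp k = Some A1 -> i k = Some d ->
    qstep {| qsig := s; qin := i; qrv := rv; qcp := cp |} (LinEnq d k)
          {| qsig := d :: s; qin := i; qrv := rv; qcp := upd cp k (Some A) |}
| q_ret_enq : forall s i rv cp k,
    cp k = Some A ->
    qstep {| qsig := s; qin := i; qrv := rv; qcp := cp |} (RetEnq k)
          {| qsig := s; qin := i; qrv := rv; qcp := upd cp k (Some A2) |}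
| q_inv_deq : forall s i rv cp k,
    cp k = None ->
    qstep {| qsig := s; qin := i; qrv := rv; qcp := cp |} (InvDeq k)
          {| qsig := s; qin := i; qrv := rv; qcp := upd cp k (Some R1) |}
| q_lin_deq : forall s' i rv cp d k,
    cp k = Some R1 ->
    qstep {| qsig := s' ++ [d]; qin := i; qrv := rv; qcp := cp |} (LinDeq d k)
          {| qsig := s'; qin := i; qrv := upd rv k (Some d); qcp := upd cp k (Some R2) |}
| q_lin_deq_empty : forall i rv cp k,
    cp k = Some R1 ->
    qstep {| qsig := []; qin := i; qrv := rv; qcp := cp |} (LinDeq EMPTY k)
          {| qsig := []; qin := i; qrv := upd rv k (Some EMPTY); qcp := upd cp k (Some R2) |}
| q_ret_deq : forall s i rv cp d k,
    cp k = Some R2 -> rv k = Some d ->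
    qstep {| qsig := s; qin := i; qrv := rv; qcp := cp |} (RetDeq d k)
          {| qsig := s; qin := i; qrv := rv; qcp := upd cp k (Some R3) |}.

Definition AbsQ0 : LTS :=
  {| St := qstate; init := qinit; step := qstep;
     alpha := fun l => isCR l || isLinDeq l || isLinEnq l |}.

From Stdlib Require Import List Arith Bool Lia FunctionalExtensionality.
Import ListNotations.

(* HWQ is mapped to AbsQ operation by operation: an enqueue enters the partial
   order when it is invoked, ordered after every completed enqueue, and a
   dequeue linearizes at its successful swap.  The invariant carries as ghost
   state the slot of [items] each enqueue obtained; since [<] only relates a
   completed enqueue to a later-invoked one, [<] increases slot numbers, and a
   dequeue whose scan has passed the slot of [a] can no longer see anything above
   [a].  Hence the value it swaps out is [<]-minimal, as AbsQ requires.

   AbsQ is in turn refined by the sequential queue AbsQ0 through a backward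
   simulation: an AbsQ state corresponds to the AbsQ0 states whose queue lists a
   [<]-compatible selection of its elements containing all completed ones.
   Which pending enqueues have been linearized is only decided by later events
   (an empty dequeue, the return of the enqueue), so the trace is matched from
   its end, after a forward pass shows that its last state has a partner. *)

Lemma upd_eq {A} (f : nat -> A) k v : upd f k v k = v.
Proof. unfold upd. now rewrite Nat.eqb_refl. Qed.

Lemma upd_neq {A} (f : nat -> A) k v o : o <> k -> upd f k v o = f o.
Proof. intros H. unfold upd. destruct (Nat.eqb_spec o k); congruence. Qed.

Lemma steps_app (L : LTS) s1 t1 s2 t2 s3 :
  steps L s1 t1 s2 -> steps L s2 t2 s3 -> steps L s1 (t1 ++ t2) s3.
Proof. induction 1; cbn; auto. intros; econstructor; eauto. Qed.

Lemma steps_one (L : LTS) s l s' : step L s l s' -> steps L s [l] s'.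
Proof. intros; econstructor; eauto; constructor. Qed.

Lemma filter_hidden (G alpha : label -> bool) sig :
  forallb (fun l => alpha l && negb (G l)) sig = true -> filter G sig = [].
Proof.
  induction sig as [|l sig IH]; cbn; auto.
  intros [[_ Hl]%andb_true_iff Hsig]%andb_true_iff.
  destruct (G l); cbn in *; [discriminate | auto].
Qed.

Lemma Gamma_refines_trans G L1 L2 L3 :
  Gamma_refines G L1 L2 -> Gamma_refines G L2 L3 -> Gamma_refines G L1 L3.
Proof.
  intros H12 H23 t Ht.
  destruct (H12 t Ht) as (t2 & Ht2 & E12). destruct (H23 t2 Ht2) as (t3 & Ht3 & E23).
  exists t3. split; congruence.
Qed.

Lemma filter_CR_Gamma (G : label -> bool) t :
  (forall l, isCR l = true -> G l = true) -> filter isCR (filter G t) = filter isCR t.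
Proof.
  intros HG. induction t as [|l t IH]; cbn; auto.
  destruct (isCR l) eqn:Hl.
  - rewrite (HG l Hl). cbn. rewrite Hl, IH. reflexivity.
  - destruct (G l); cbn; rewrite ?Hl; auto.
Qed.

Lemma Gamma_refines_refines G L1 L2 :
  (forall l, isCR l = true -> G l = true) -> Gamma_refines G L1 L2 -> refines L1 L2.
Proof.
  intros HG H t Ht. destruct (H t Ht) as (t' & Ht' & E).
  exists t'. split; auto. rewrite <- (filter_CR_Gamma G t), <- (filter_CR_Gamma G t'), E; auto.
Qed.

Section ForwardSimulation.
Variables (G : label -> bool) (L1 L2 : LTS) (fs : St L1 -> St L2 -> Prop).
Hypothesis Hfs : fwd_sim G L1 L2 fs.

Lemma fwd_sim_steps s t s' : steps L1 s t s' ->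
  forall u, fs s u -> exists t2 u', steps L2 u t2 u' /\ filter G t = filter G t2.
Proof.
  destruct Hfs as (_ & _ & _ & HG & HN).
  induction 1 as [s|s l s1 t s2 Hst Hsteps IH]; intros u Hu.
  - exists [], u; split; [constructor | reflexivity].
  - destruct (G l) eqn:Gl.
    + destruct (HG _ _ _ _ Hst Gl Hu) as (sig1 & sig2 & u1 & F1 & F2 & S1 & Hu1).
      destruct (IH u1 Hu1) as (t2 & u' & S2 & E).
      exists ((sig1 ++ l :: sig2) ++ t2), u'. split; [eapply steps_app; eauto|].
      rewrite !filter_app, (filter_hidden _ _ _ F1). cbn.
      rewrite Gl, (filter_hidden _ _ _ F2), E. reflexivity.
    + destruct (HN _ _ _ _ Hst Gl Hu) as (sig & u1 & F & S1 & Hu1).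
      destruct (IH u1 Hu1) as (t2 & u' & S2 & E).
      exists (sig ++ t2), u'. split; [eapply steps_app; eauto|].
      rewrite filter_app, (filter_hidden _ _ _ F). cbn. rewrite Gl. exact E.
Qed.

Lemma fwd_sim_Gamma_refines : Gamma_refines G L1 L2.
Proof.
  intros t [s Hs]. destruct Hfs as (_ & _ & Hinit & _).
  destruct (fwd_sim_steps _ _ _ Hs (init L2)) as (t2 & u & S & E); [apply Hinit; auto|].
  exists t2. split; [exists u|]; auto.
Qed.

End ForwardSimulation.

(* A backward simulation only transports a trace once the final state of the
   trace has some related state; [bsim_total] supplies it by a forward pass. *)
Section BackwardSimulation.
Variables (G : label -> bool) (L1 L2 : LTS).
Variables (Inv : St L1 -> Prop) (B : St L1 -> St L2 -> Prop).
Hypothesis inv_init : Inv (init L1).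
Hypothesis inv_step : forall u l u', Inv u -> step L1 u l u' -> Inv u'.
Hypothesis bsim_init : B (init L1) (init L2).
Hypothesis bsim_init_unique : forall q, B (init L1) q -> q = init L2.
Hypothesis bsim_total : forall u l u' q, Inv u -> step L1 u l u' -> B u q -> exists q', B u' q'.
Hypothesis bsim_back : forall u l u' q', Inv u -> step L1 u l u' -> B u' q' ->
  exists q w, B u q /\ steps L2 q w q' /\ filter G w = filter G [l].

Lemma bsim_steps_total u t u' : steps L1 u t u' -> Inv u -> (exists q, B u q) -> exists q', B u' q'.
Proof.
  induction 1 as [u|u l u1 t u2 Hst _ IH]; auto.
  intros Hu [q Hq]. apply IH; [eapply inv_step; eauto | eapply bsim_total; eauto].
Qed.

Lemma bsim_steps_back u t u' : steps L1 u t u' -> Inv u -> forall q', B u' q' ->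
  exists q w, B u q /\ steps L2 q w q' /\ filter G w = filter G t.
Proof.
  induction 1 as [u|u l u1 t u2 Hst _ IH]; intros Hu q' Hq'.
  - exists q', []; repeat split; auto; constructor.
  - destruct (IH (inv_step _ _ _ Hu Hst) q' Hq') as (q1 & w1 & Hq1 & S1 & E1).
    destruct (bsim_back _ _ _ _ Hu Hst Hq1) as (q & w0 & Hq & S0 & E0).
    exists q, (w0 ++ w1). repeat split; auto; [eapply steps_app; eauto|].
    rewrite filter_app, E0, E1. cbn. destruct (G l); reflexivity.
Qed.

Lemma bsim_Gamma_refines : Gamma_refines G L1 L2.
Proof.
  intros t [u Hu].
  destruct (bsim_steps_total _ _ _ Hu inv_init (ex_intro _ _ bsim_init)) as [q' Hq'].
  destruct (bsim_steps_back _ _ _ Hu inv_init q' Hq') as (q & w & Hq & S & E).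
  apply bsim_init_unique in Hq. subst q. exists w. split; [exists q'|]; auto.
Qed.

End BackwardSimulation.

Definition slotted (h : option hloc) : Prop :=
  match h with Some (HE2 _ _ | HE3 _ | HE4 _) => True | _ => False end.

Definition enq_free (h : option hloc) : Prop :=
  match h with Some (HE1 _ | HE2 _ _ | HE3 _ | HE4 _) => False | _ => True end.

Definition abs_cp (h : option hloc) : option cpc :=
  match h with
  | None => None
  | Some (HE1 _ | HE2 _ _ | HE3 _) => Some A1
  | Some (HE4 _) => Some A2
  | Some (HD1 | HD2 _ _) => Some R1
  | Some (HD3 _) => Some R2
  | Some (HD4 _) => Some R3
  end.

(* [idx k] is the slot obtained by enqueue [k] at its fetch-and-increment of
   [back]; it is meaningful only once [k] is [slotted]. *)
Record hwq_inv (s : hstate) (u : astate) (idx : nat -> nat) : Prop := {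
  inv_cp : forall k, acp u k = abs_cp (hloc_of s k);
  inv_rv : forall k x, hloc_of s k = Some (HD3 x) -> arv u k = Some (VNat x);
  inv_label : forall k, aO u k = true -> exists h x,
    hloc_of s k = Some h /\ enq_value h = Some x /\
    fst (alab u k) = VNat x /\ (snd (alab u k) = COMP <-> h = HE4 x);
  inv_fai_pending : forall k x, hloc_of s k = Some (HE1 x) -> aO u k = true;
  inv_write_pending : forall k x i, hloc_of s k = Some (HE2 x i) -> aO u k = true;
  inv_slot_idx : forall k x i, hloc_of s k = Some (HE2 x i) -> idx k = i;
  inv_slot_back : forall k, slotted (hloc_of s k) -> idx k < back s;
  inv_slot_inj : forall k1 k2, slotted (hloc_of s k1) -> slotted (hloc_of s k2) ->
    idx k1 = idx k2 -> k1 = k2;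
  inv_items_written : forall k x, aO u k = true ->
    (hloc_of s k = Some (HE3 x) \/ hloc_of s k = Some (HE4 x)) -> items s (idx k) = Some x;
  inv_items_owner : forall i x, items s i = Some x -> exists k, aO u k = true /\
    (hloc_of s k = Some (HE3 x) \/ hloc_of s k = Some (HE4 x)) /\ idx k = i;
  inv_order_done : forall a b, alt u a b ->
    aO u a = true /\ aO u b = true /\ exists x, hloc_of s a = Some (HE4 x);
  inv_order_slot : forall a b, alt u a b -> slotted (hloc_of s b) -> idx a < idx b;
  inv_range : forall k n j, hloc_of s k = Some (HD2 n j) -> n <= back s;
  inv_scan : forall k n j a b, hloc_of s k = Some (HD2 n j) -> alt u a b ->
    idx a < j -> slotted (hloc_of s b) -> n <= idx b
}.

Lemma hwq_inv_init : hwq_inv hinit ainit (fun _ => 0).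
Proof. constructor; cbn; intros; try discriminate; tauto. Qed.

Ltac split_upd j k :=
  destruct (Nat.eq_dec j k) as [->|?]; [rewrite ?upd_eq | rewrite ?upd_neq by assumption].

Lemma hwq_inv_move_outside_enq it b lc k h' u u' idx :
  enq_free (lc k) -> enq_free (Some h') ->
  aO u' = aO u -> alab u' = alab u -> alt u' = alt u ->
  (forall j, j <> k -> acp u' j = acp u j) -> acp u' k = abs_cp (Some h') ->
  (forall j, j <> k -> arv u' j = arv u j) -> (forall x, h' = HD3 x -> arv u' k = Some (VNat x)) ->
  (forall n j, h' = HD2 n j ->
     n <= b /\ forall a c, alt u a c -> idx a < j -> slotted (lc c) -> n <= idx c) ->
  hwq_inv {| items := it; back := b; hloc_of := lc |} u idx ->
  hwq_inv {| items := it; back := b; hloc_of := upd lc k (Some h') |} u' idx.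
Proof.
  destruct u as [O lt lab rv cp], u' as [O' lt' lab' rv' cp'].
  intros Hold Hnew HO Hlab Hlt Hcp Hcpk Hrv Hrvk Hscan'
    [Icp Irv Ilab Ifai Iwrite Iidx Iback Iinj Iwritten Iowner Idone Islot Irange Iscan].
  cbn in *. subst O' lt' lab'.
  assert (Henq : forall j h, enq_value h <> None ->
            upd lc k (Some h') j = Some h <-> lc j = Some h).
  { intros j h Hh. split_upd j k; [|tauto].
    split; intros E; [injection E as <-; destruct h' | rewrite E in Hold; destruct h];
      cbn in *; tauto || congruence. }
  assert (Hsl : forall j, slotted (upd lc k (Some h') j) <-> slotted (lc j)).
  { intros j; split_upd j k; [destruct h', (lc k) as [[]|]; cbn in *; tauto | tauto]. }
  constructor; cbn.
  - intros j; split_upd j k; [exact Hcpk | rewrite Hcp; auto].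
  - intros j x; split_upd j k; [intros E; injection E as ->; auto | rewrite Hrv; auto].
  - intros j Hj; destruct (Ilab j Hj) as (h & x & Hh & Hx & Hrest).
    exists h, x. rewrite Henq by congruence. auto.
  - intros j x; rewrite Henq by discriminate; eauto.
  - intros j x i; rewrite Henq by discriminate; eauto.
  - intros j x i; rewrite Henq by discriminate; eauto.
  - intros j; rewrite Hsl; auto.
  - intros k1 k2; rewrite !Hsl; auto.
  - intros j x Hj; rewrite !Henq by discriminate; auto.
  - intros i x Hi; destruct (Iowner i x Hi) as (j & ? & ? & ?).
    exists j; rewrite !Henq by discriminate; auto.
  - intros a c Hac; destruct (Idone a c Hac) as (? & ? & x & Hx).
    repeat split; auto. exists x. rewrite Henq by discriminate; auto.
  - intros a c; rewrite Hsl; auto.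
  - intros j n i; split_upd j k; [intros E; injection E as ->; apply (Hscan' n i); auto | eauto].
  - intros j n i a c; rewrite Hsl; split_upd j k; [intros E; injection E as ->|]; intros.
    + eapply Hscan'; eauto.
    + eapply Iscan; eauto.
Qed.

Ltac destruct_inv H :=
  destruct H as [Icp Irv Ilab Ifai Iwrite Iidx Iback Iinj Iwritten Iowner Idone Islot Irange Iscan].

Lemma hwq_inv_fai it b lc x k u idx : lc k = Some (HE1 x) ->
  hwq_inv {| items := it; back := b; hloc_of := lc |} u idx ->
  hwq_inv {| items := it; back := b + 1; hloc_of := upd lc k (Some (HE2 x b)) |} u (upd idx k b).
Proof.
  intros Hk Hi; destruct_inv Hi; cbn in *; constructor; cbn.
  - intros j; unfold upd; destruct (Nat.eqb_spec j k) as [->|]; [rewrite Icp, Hk; reflexivity | apply Icp].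
  - intros j y; unfold upd; destruct (Nat.eqb_spec j k); [discriminate | apply Irv].
  - intros j Hj; unfold upd; destruct (Nat.eqb_spec j k) as [->|].
    + destruct (Ilab k Hj) as (h & y & Hh & Hev & Hf & Hs). rewrite Hk in Hh; injection Hh as <-.
      cbn in Hev; injection Hev as <-. exists (HE2 x b), x. repeat split; auto.
      * intro C; apply Hs in C; discriminate.
      * intro C; discriminate.
    + apply Ilab; auto.
  - intros j y; unfold upd; destruct (Nat.eqb_spec j k); [discriminate | apply Ifai].
  - intros j y i; unfold upd; destruct (Nat.eqb_spec j k) as [->|]; [intros _; eapply Ifai; eauto | eauto].
  - intros j y i; unfold upd; destruct (Nat.eqb_spec j k) as [->|]; intros H; [injection H; auto | eauto].
  - intros j; unfold upd; destruct (Nat.eqb_spec j k); [lia | intros H; specialize (Iback j H); lia].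
  - intros k1 k2; unfold upd; destruct (Nat.eqb_spec k1 k); destruct (Nat.eqb_spec k2 k); subst; auto.
    + intros _ H2 E; specialize (Iback k2 H2); lia.
    + intros H1 _ E; specialize (Iback k1 H1); lia.
  - intros j y HO; unfold upd; destruct (Nat.eqb_spec j k);
      [intros [H|H]; discriminate | intros H; apply Iwritten; auto].
  - intros i y Hi; destruct (Iowner i y Hi) as (w & Hw1 & Hw2 & Hw3). exists w; unfold upd;
      destruct (Nat.eqb_spec w k) as [->|]; [rewrite Hk in Hw2; destruct Hw2; discriminate | auto].
  - intros a c H; destruct (Idone a c H) as (? & ? & y & Hy); unfold upd;
      destruct (Nat.eqb_spec a k) as [->|]; [rewrite Hk in Hy; discriminate | eauto].
  - intros a c H; destruct (Idone a c H) as (_ & _ & y & Hy). unfold upd.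
    destruct (Nat.eqb_spec a k); [congruence|].
    destruct (Nat.eqb_spec c k) as [->|].
    + intros _. apply Iback. rewrite Hy; exact I.
    + intros Hs; apply Islot; auto.
  - intros j n i; unfold upd; destruct (Nat.eqb_spec j k);
      [discriminate | intros H; specialize (Irange _ _ _ H); lia].
  - intros j n i a c; unfold upd; destruct (Nat.eqb_spec j k); [discriminate|]. intros Hj Hac.
    destruct (Idone a c Hac) as (_&_&y&Hy). destruct (Nat.eqb_spec a k); [congruence|].
    destruct (Nat.eqb_spec c k) as [->|].
    + intros _ _. eapply Irange; eauto.
    + intros; eapply Iscan; eauto.
Qed.

Lemma hwq_inv_write it b lc x i k u idx : lc k = Some (HE2 x i) ->
  hwq_inv {| items := it; back := b; hloc_of := lc |} u idx ->
  hwq_inv {| items := upd it i (Some x); back := b; hloc_of := upd lc k (Some (HE3 x)) |} u idx.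
Proof.
  intros Hk Hi; destruct_inv Hi; cbn in *.
  assert (Hsl : forall j, slotted (upd lc k (Some (HE3 x)) j) -> slotted (lc j)).
  { intros j; unfold upd; destruct (Nat.eqb_spec j k) as [->|]; [intros _; rewrite Hk; exact I | auto]. }
  assert (HOk : aO u k = true) by (eapply Iwrite; eauto).
  assert (Hik : idx k = i) by (eapply Iidx; eauto).
  constructor; cbn.
  - intros j; unfold upd; destruct (Nat.eqb_spec j k) as [->|]; [rewrite Icp, Hk; reflexivity | apply Icp].
  - intros j y; unfold upd; destruct (Nat.eqb_spec j k); [discriminate | apply Irv].
  - intros j Hj; unfold upd; destruct (Nat.eqb_spec j k) as [->|].
    + destruct (Ilab k Hj) as (h & y & Hh & Hev & Hf & Hs). rewrite Hk in Hh; injection Hh as <-.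
      cbn in Hev; injection Hev as <-. exists (HE3 x), x. repeat split; auto.
      * intro C; apply Hs in C; discriminate.
      * intro C; discriminate.
    + apply Ilab; auto.
  - intros j y; unfold upd; destruct (Nat.eqb_spec j k); [discriminate | apply Ifai].
  - intros j y i'; unfold upd; destruct (Nat.eqb_spec j k); [discriminate | eauto].
  - intros j y i'; unfold upd; destruct (Nat.eqb_spec j k); [discriminate | eauto].
  - intros j H; apply Iback, Hsl, H.
  - intros k1 k2 H1 H2; apply Iinj; auto.
  - intros j y HOj; destruct (Nat.eq_dec j k) as [->|Hjk].
    + rewrite upd_eq. intros [H|H]; [injection H as <-|discriminate]. rewrite Hik, upd_eq; auto.
    + rewrite (upd_neq _ _ _ _ Hjk). intros H. rewrite upd_neq. apply Iwritten; auto.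
      intro E. apply Hjk. apply Iinj; auto;
        [destruct H as [H|H]; rewrite H; exact I | rewrite Hk; exact I | congruence].
  - intros i0 y; unfold upd at 1; destruct (Nat.eqb_spec i0 i) as [->|].
    + intros H; injection H as <-. exists k. split; auto. rewrite upd_eq. auto.
    + intros H; destruct (Iowner _ _ H) as (w & Hw1 & Hw2 & Hw3). exists w.
      destruct (Nat.eqb_spec w k) as [->|]; [rewrite Hk in Hw2; destruct Hw2; discriminate|].
      rewrite upd_neq; auto.
  - intros a c H; destruct (Idone a c H) as (? & ? & y & Hy); unfold upd;
      destruct (Nat.eqb_spec a k) as [->|]; [rewrite Hk in Hy; discriminate | eauto].
  - intros a c H Hs; apply Islot; auto.
  - intros j n i'; unfold upd; destruct (Nat.eqb_spec j k); [discriminate | eauto].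
  - intros j n i' a c; unfold upd at 1; destruct (Nat.eqb_spec j k); [discriminate|].
    intros; eapply Iscan; eauto.
Qed.

Lemma hwq_inv_enq_call it b lc x k u idx : lc k = None ->
  hwq_inv {| items := it; back := b; hloc_of := lc |} u idx ->
  exists u', astep u (InvEnq (VNat x) k) u' /\
  hwq_inv {| items := it; back := b; hloc_of := upd lc k (Some (HE1 x)) |} u' idx.
Proof.
  intros Hk Hi. destruct u as [O lt lab rv cp]. destruct_inv Hi; cbn in *.
  assert (HOk : O k = false).
  { destruct (O k) eqn:E; auto. destruct (Ilab k E) as (h & _ & Hh & _). congruence. }
  assert (Hsl : forall j, slotted (upd lc k (Some (HE1 x)) j) -> slotted (lc j)).
  { intros j; unfold upd; destruct (Nat.eqb_spec j k) as [->|]; [intros [] | auto]. }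
  eexists; split.
  { apply a_inv_enq; [rewrite Icp, Hk; reflexivity | discriminate]. }
  constructor; cbn.
  - intros j; unfold upd; destruct (Nat.eqb_spec j k) as [->|]; [reflexivity | apply Icp].
  - intros j y; unfold upd; destruct (Nat.eqb_spec j k); [discriminate | apply Irv].
  - intros j Hj; destruct (Nat.eq_dec j k) as [->|Hjk]; [rewrite !upd_eq|rewrite !upd_neq in * by exact Hjk].
    + exists (HE1 x), x. cbn. repeat split; discriminate.
    + apply Ilab; auto.
  - intros j y; unfold upd; destruct (Nat.eqb_spec j k); [auto | eauto].
  - intros j y i'; unfold upd; destruct (Nat.eqb_spec j k); [discriminate | eauto].
  - intros j y i'; unfold upd; destruct (Nat.eqb_spec j k); [discriminate | eauto].
  - intros j H; apply Iback, Hsl, H.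
  - intros k1 k2 H1 H2; apply Iinj; auto.
  - intros j y; unfold upd; destruct (Nat.eqb_spec j k); [intros _ [H|H]; discriminate|]. eauto.
  - intros i0 y H; destruct (Iowner _ _ H) as (w & Hw1 & Hw2 & Hw3). exists w.
    unfold upd; destruct (Nat.eqb_spec w k) as [->|]; [rewrite Hk in Hw2; destruct Hw2; discriminate|]. auto.
  - intros a c [H|(-> & HOa & Hca)].
    + destruct (Idone a c H) as (HOa & HOc & y & Hy).
      assert (a <> k) by congruence. assert (c <> k) by congruence.
      rewrite !upd_neq by auto. eauto.
    + assert (Hak : a <> k) by congruence. rewrite (upd_neq O k _ a Hak), upd_eq, (upd_neq lc k _ a Hak).
      split; [auto|split; [auto|]]. destruct (Ilab a HOa) as (h & y & Hh & _ & _ & Hs).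
      exists y. rewrite Hh. f_equal. apply Hs, Hca.
  - intros a c [H|(-> & HOa & Hca)].
    + intros Hs. apply Islot; auto.
    + unfold upd; rewrite Nat.eqb_refl; intros [].
  - intros j n' i'; unfold upd; destruct (Nat.eqb_spec j k); [discriminate | eauto].
  - intros j n' i' a c; unfold upd at 1; destruct (Nat.eqb_spec j k); [discriminate|].
    intros Hj [H|(-> & HOa & Hca)].
    + intros; eapply Iscan; eauto.
    + unfold upd; rewrite Nat.eqb_refl; intros _ [].
Qed.

Lemma hwq_inv_enq_return it b lc x k u idx : lc k = Some (HE3 x) ->
  hwq_inv {| items := it; back := b; hloc_of := lc |} u idx ->
  exists u', astep u (RetEnq k) u' /\
  hwq_inv {| items := it; back := b; hloc_of := upd lc k (Some (HE4 x)) |} u' idx.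
Proof.
  intros Hk Hi. destruct u as [O lt lab rv cp]. destruct_inv Hi; cbn in *.
  assert (Hsl : forall j, slotted (upd lc k (Some (HE4 x)) j) -> slotted (lc j)).
  { intros j; unfold upd; destruct (Nat.eqb_spec j k) as [->|]; [intros _; rewrite Hk; exact I | auto]. }
  eexists; split.
  { apply a_ret_enq; rewrite Icp, Hk; reflexivity. }
  assert (Ilab' : forall j, j <> k -> (if O k then upd lab k (fst (lab k), COMP) else lab) j = lab j).
  { intros j Hj; destruct (O k); auto; apply upd_neq; auto. }
  constructor; cbn.
  - intros j; unfold upd; destruct (Nat.eqb_spec j k) as [->|]; [reflexivity | apply Icp].
  - intros j y; unfold upd; destruct (Nat.eqb_spec j k); [discriminate | apply Irv].
  - intros j Hj; destruct (Nat.eq_dec j k) as [->|Hjk].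
    + rewrite Hj, !upd_eq. destruct (Ilab k Hj) as (h & y & Hh & Hev & Hf & Hs).
      rewrite Hk in Hh; injection Hh as <-. cbn in Hev; injection Hev as <-.
      exists (HE4 x), x. cbn. repeat split; auto.
    + rewrite Ilab', !upd_neq by auto. apply Ilab; auto.
  - intros j y; unfold upd; destruct (Nat.eqb_spec j k); [discriminate | eauto].
  - intros j y i'; unfold upd; destruct (Nat.eqb_spec j k); [discriminate | eauto].
  - intros j y i'; unfold upd; destruct (Nat.eqb_spec j k); [discriminate | eauto].
  - intros j H; apply Iback, Hsl, H.
  - intros k1 k2 H1 H2; apply Iinj; auto.
  - intros j y HOj; unfold upd; destruct (Nat.eqb_spec j k) as [->|].
    + intros [H|H]; [discriminate| injection H as <-]. eapply Iwritten; eauto.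
    + eauto.
  - intros i0 y H; destruct (Iowner _ _ H) as (w & Hw1 & Hw2 & Hw3). exists w.
    unfold upd; destruct (Nat.eqb_spec w k) as [->|]; [|auto].
    rewrite Hk in Hw2. destruct Hw2 as [Hw2|Hw2]; [injection Hw2 as <-|discriminate]. auto.
  - intros a c H; destruct (Idone a c H) as (? & ? & y & Hy); unfold upd;
      destruct (Nat.eqb_spec a k) as [->|]; [rewrite Hk in Hy; discriminate | eauto].
  - intros a c H Hs; apply Islot; auto.
  - intros j n' i'; unfold upd; destruct (Nat.eqb_spec j k); [discriminate | eauto].
  - intros j n' i' a c; unfold upd at 1; destruct (Nat.eqb_spec j k); [discriminate|].
    intros; eapply Iscan; eauto.
Qed.
(* The value found by a successful swap belongs to a [<]-minimal element of [O]:
   an element below it would have its slot scanned already ([inv_order_slot]),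
   which [inv_scan] forbids. *)
Lemma hwq_swap_owner_minimal it b lc n i x k u idx :
  hwq_inv {| items := it; back := b; hloc_of := lc |} u idx ->
  lc k = Some (HD2 n i) -> i < n -> it i = Some x ->
  exists k', aO u k' = true /\ (lc k' = Some (HE3 x) \/ lc k' = Some (HE4 x)) /\ idx k' = i /\
    fst (alab u k') = VNat x /\ forall o, aO u o = true -> ~ alt u o k'.
Proof.
  intros Hi Hk Hin Hit.
  destruct (inv_items_owner _ _ _ Hi i x Hit) as (k' & HOk' & Hk' & Hik'). cbn in Hk'.
  assert (Hsk' : slotted (lc k')) by (destruct Hk' as [H|H]; rewrite H; exact I).
  exists k'. repeat split; auto.
  - destruct (inv_label _ _ _ Hi k' HOk') as (h & y & Hh & Hev & Hf & _). rewrite Hf. cbn in Hh.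
    destruct Hk' as [H|H]; rewrite H in Hh; injection Hh as <-; cbn in Hev; congruence.
  - intros o _ Hlto.
    pose proof (inv_order_slot _ _ _ Hi o k' Hlto Hsk').
    pose proof (inv_scan _ _ _ Hi k n i o k' Hk Hlto ltac:(lia) Hsk'). cbn in *. lia.
Qed.

Lemma hwq_inv_swap_found it b lc n i x k u idx : lc k = Some (HD2 n i) -> i < n -> it i = Some x ->
  hwq_inv {| items := it; back := b; hloc_of := lc |} u idx ->
  exists u', astep u (LinDeq (VNat x) k) u' /\
  hwq_inv {| items := upd it i None; back := b; hloc_of := upd lc k (Some (HD3 x)) |} u' idx.
Proof.
  intros Hk Hin Hit Hi.
  destruct (hwq_swap_owner_minimal _ _ _ _ _ _ _ _ _ Hi Hk Hin Hit)
    as (k' & HOk' & Hk' & Hik' & Hlab' & Hmin).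
  destruct u as [O lt lab rv cp]. destruct_inv Hi; cbn in *.
  assert (Hsl : forall j, slotted (upd lc k (Some (HD3 x)) j) -> slotted (lc j)).
  { intros j; unfold upd; destruct (Nat.eqb_spec j k) as [->|]; [intros [] | auto]. }
  assert (Hsk' : slotted (lc k')) by (destruct Hk' as [H|H]; rewrite H; exact I).
  assert (Hkk : k <> k') by (intro; subst; destruct Hk' as [H|H]; congruence).
  eexists; split.
  { eapply a_lin_deq with (k' := k'); eauto; [rewrite Icp, Hk; reflexivity | discriminate]. }
  constructor; cbn.
  - intros j; unfold upd; destruct (Nat.eqb_spec j k) as [->|]; [reflexivity | apply Icp].
  - intros j y; unfold upd; destruct (Nat.eqb_spec j k); [intros H; injection H as <-; auto | apply Irv].
  - intros j; unfold upd; destruct (Nat.eqb_spec j k'); [discriminate|]. intros Hj.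
    destruct (Nat.eqb_spec j k) as [->|].
    + destruct (Ilab k Hj) as (h & y & Hh & Hev & _). rewrite Hk in Hh; injection Hh as <-. discriminate.
    + apply Ilab; auto.
  - intros j y; unfold upd; destruct (Nat.eqb_spec j k); [discriminate|].
    destruct (Nat.eqb_spec j k') as [->|]; [destruct Hk' as [H|H]; congruence| eauto].
  - intros j y i'; unfold upd; destruct (Nat.eqb_spec j k); [discriminate|].
    destruct (Nat.eqb_spec j k') as [->|]; [destruct Hk' as [H|H]; congruence| eauto].
  - intros j y i'; unfold upd; destruct (Nat.eqb_spec j k); [discriminate | eauto].
  - intros j H; apply Iback, Hsl, H.
  - intros k1 k2 H1 H2; apply Iinj; auto.
  - intros j y; unfold upd; destruct (Nat.eqb_spec j k') as [|Hjk']; [discriminate|]. intros HOj.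
    destruct (Nat.eqb_spec j k); [intros [H|H]; discriminate|]. intros H.
    destruct (Nat.eqb_spec (idx j) i).
    + exfalso. apply Hjk'. apply Iinj; auto. destruct H as [H|H]; rewrite H; exact I. congruence.
    + eauto.
  - intros i0 y; unfold upd at 1; destruct (Nat.eqb_spec i0 i); [discriminate|]. intros H.
    destruct (Iowner _ _ H) as (w & Hw1 & Hw2 & Hw3). exists w.
    assert (w <> k') by congruence.
    assert (w <> k) by (intro; subst; destruct Hw2 as [Hw2|Hw2]; congruence).
    rewrite !upd_neq by auto. auto.
  - intros a c (H & Ha & Hc); destruct (Idone a c H) as (? & ? & y & Hy).
    assert (a <> k) by congruence.
    rewrite !upd_neq by auto. eauto.
  - intros a c (H & _ & _) Hs; apply Islot; auto.
  - intros j n' i'; unfold upd; destruct (Nat.eqb_spec j k); [discriminate | eauto].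
  - intros j n' i' a c; unfold upd at 1; destruct (Nat.eqb_spec j k); [discriminate|].
    intros Hj (H & _ & _); intros; eapply Iscan; eauto.
Qed.

Lemma hwq_inv_tau s s' u idx : hstep s Tau s' -> hwq_inv s u idx -> exists idx', hwq_inv s' u idx'.
Proof.
  intros Hs Hi. inversion Hs as [| it b lc x k Hk | it b lc x i k Hk | | | it b lc k Hk
    | it b lc n i k Hk Hin Hit | | it b lc n i k Hk Hin | ]; subst.
  - eexists; eapply hwq_inv_fai; eauto.
  - eexists; eapply hwq_inv_write; eauto.
  - exists idx. eapply hwq_inv_move_outside_enq; rewrite ?Hk; cbn; eauto; try discriminate;
      try (rewrite (inv_cp _ _ _ Hi); cbn; rewrite Hk; reflexivity).
    intros n j E; injection E as <- <-. split; [auto | intros; lia].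
  - exists idx. replace (upd it i None) with it
      by (apply functional_extensionality; intros j; unfold upd; destruct (Nat.eqb_spec j i); congruence).
    eapply hwq_inv_move_outside_enq; rewrite ?Hk; cbn; eauto; try discriminate;
      try (rewrite (inv_cp _ _ _ Hi); cbn; rewrite Hk; reflexivity).
    intros n' j E; injection E as <- <-. split; [exact (inv_range _ _ _ Hi k n i Hk)|].
    intros a c Hac Ha Hc. destruct (Nat.eq_dec (idx a) i) as [<-|Hai].
    + (* the slot of a done enqueue still holds its value, so it is not the empty slot [i] *)
      destruct (inv_order_done _ _ _ Hi a c Hac) as (HOa & _ & y & Hy).
      pose proof (inv_items_written _ _ _ Hi a y HOa (or_intror Hy)). cbn in *. congruence.
    + eapply (inv_scan _ _ _ Hi k n i); eauto. lia.
  - exists idx. eapply hwq_inv_move_outside_enq; rewrite ?Hk; cbn; eauto; try discriminate.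
    rewrite (inv_cp _ _ _ Hi); cbn; rewrite Hk; reflexivity.
Qed.

Lemma hwq_inv_visible s g s' u idx : hstep s g s' -> GammaCRL g = true -> hwq_inv s u idx ->
  exists u', astep u g u' /\ hwq_inv s' u' idx.
Proof.
  intros Hs HG Hi. destruct u as [O lt lab rv cp].
  inversion Hs as [it b lc x k Hk | | | it b lc x k Hk | it b lc k Hk | | | it b lc n i x k Hk Hin Hit
    | | it b lc x k Hk]; subst; try discriminate HG;
    pose proof (inv_cp _ _ _ Hi) as Icp; cbn in Icp.
  - eapply hwq_inv_enq_call; eauto.
  - eapply hwq_inv_enq_return; eauto.
  - eexists; split; [apply a_inv_deq; rewrite Icp, Hk; reflexivity|].
    eapply hwq_inv_move_outside_enq; rewrite ?Hk; cbn; eauto; try discriminate.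
    all: intros; rewrite ?upd_eq, ?upd_neq; auto.
  - eapply hwq_inv_swap_found; eauto.
  - eexists; split; [apply a_ret_deq; [rewrite Icp, Hk | apply (inv_rv _ _ _ Hi k x Hk)]; reflexivity|].
    eapply hwq_inv_move_outside_enq; rewrite ?Hk; cbn; eauto; try discriminate.
    all: intros; rewrite ?upd_eq, ?upd_neq; auto.
Qed.

Definition hwq_abs (s : hstate) (u : astate) : Prop :=
  (exists idx, hwq_inv s u idx) /\ (s = hinit -> u = ainit).

Lemma hstep_not_init s g s' : hstep s g s' -> s' <> hinit.
Proof.
  intros Hs E. apply (f_equal (fun s => hloc_of s)) in E.
  inversion Hs; subst; cbn in E; apply (f_equal (fun f => f k)) in E;
    rewrite upd_eq in E; discriminate.
Qed.

Lemma hwq_abs_fwd_sim : fwd_sim GammaCRL HWQ AbsQ hwq_abs.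
Proof.
  split; [|split; [|split; [|split]]].
  - intros l H; unfold GammaCRL; rewrite H; reflexivity.
  - intros l H; destruct l; cbn in *; auto.
  - intros u; split; [intros [_ H]; auto|].
    intros ->; split; [exists (fun _ => 0); apply hwq_inv_init | auto].
  - intros s g s' u Hs HG [[idx Hi] _].
    destruct (hwq_inv_visible _ _ _ _ _ Hs HG Hi) as (u' & Ha & Hi').
    exists [], [], u'. repeat split; [econstructor; [exact Ha | constructor] | exists idx; auto |].
    intros E; exfalso; eapply hstep_not_init; eauto.
  - intros s e s' u Hs HG [[idx Hi] _].
    destruct e; try discriminate HG; [inversion Hs|].
    destruct (hwq_inv_tau _ _ _ _ Hs Hi) as [idx' Hi'].
    exists [], u. repeat split; [constructor | exists idx'; auto |].
    intros E; exfalso; eapply hstep_not_init; eauto.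
Qed.

Record abs_inv (u : astate) : Prop := {
  abs_status : forall k, aO u k = true ->
    (acp u k = Some A1 /\ snd (alab u k) = PEND) \/ (acp u k = Some A2 /\ snd (alab u k) = COMP);
  abs_order_done : forall a b, alt u a b -> aO u a = true /\ aO u b = true /\ snd (alab u a) = COMP
}.

Lemma abs_inv_init : abs_inv ainit.
Proof. split; cbn; [discriminate | tauto]. Qed.

Lemma abs_inv_step u l u' : abs_inv u -> astep u l u' -> abs_inv u'.
Proof.
  intros [H1 H2] Hs; inversion Hs; subst; cbn in *; split; cbn.
  - intros j; unfold upd; destruct (Nat.eqb_spec j k) as [->|]; auto.
  - assert (HOk : O k = false)
      by (destruct (O k) eqn:E; auto; destruct (H1 k E) as [[C _]|[C _]]; congruence).
    intros a b [Hab|(-> & HOa & Hc)].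
    + destruct (H2 a b Hab) as (? & ? & ?).
      assert (a <> k) by congruence. assert (b <> k) by congruence.
      rewrite !upd_neq by auto. auto.
    + assert (a <> k) by congruence. rewrite !upd_neq by auto. rewrite upd_eq.
      repeat split; auto; rewrite upd_neq; auto.
  - intros j Hj. destruct (Nat.eq_dec j k) as [->|Hjk].
    + rewrite upd_eq. right; split; auto. rewrite Hj, upd_eq; auto.
    + rewrite upd_neq by auto. destruct (O k); [rewrite upd_neq by auto|]; auto.
  - intros a b Hab. destruct (H2 a b Hab) as (? & ? & Hc). repeat split; auto.
    destruct (O k) eqn:E; auto. unfold upd; destruct (Nat.eqb_spec a k) as [->|]; auto.
  - intros j Hj. destruct (Nat.eq_dec j k) as [->|Hjk].
    + destruct (H1 k Hj) as [[C _]|[C _]]; congruence.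
    + rewrite upd_neq by auto. auto.
  - auto.
  - intros j; unfold upd; destruct (Nat.eqb_spec j k'); [discriminate|]. intros Hj.
    destruct (Nat.eqb_spec j k) as [->|].
    + destruct (H1 k Hj) as [[C _]|[C _]]; congruence.
    + auto.
  - intros a b (Hab & Ha & Hb). destruct (H2 a b Hab) as (? & ? & ?).
    rewrite !upd_neq by auto. auto.
  - intros j Hj. destruct (Nat.eq_dec j k) as [->|Hjk].
    + destruct (H1 k Hj) as [[C _]|[C _]]; congruence.
    + rewrite upd_neq by auto. auto.
  - auto.
  - intros j Hj. destruct (Nat.eq_dec j k) as [->|Hjk].
    + destruct (H1 k Hj) as [[C _]|[C _]]; congruence.
    + rewrite upd_neq by auto. auto.
  - auto.
Qed.

Lemma ForallOrdPairs_impl_in {A} (R R' : A -> A -> Prop) L :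
  (forall x y, In x L -> In y L -> R x y -> R' x y) -> ForallOrdPairs R L -> ForallOrdPairs R' L.
Proof.
  induction L as [|x L IH]; intros H HL; constructor; inversion HL as [|? ? Hx HL']; subst.
  - apply Forall_forall. intros y Hy. apply H; cbn; auto. revert y Hy. apply Forall_forall, Hx.
  - apply IH; auto. intros a b Ha Hb. apply H; cbn; auto.
Qed.

Lemma ForallOrdPairs_app_iff {A} (R : A -> A -> Prop) L1 L2 :
  ForallOrdPairs R (L1 ++ L2) <->
  ForallOrdPairs R L1 /\ ForallOrdPairs R L2 /\ (forall x y, In x L1 -> In y L2 -> R x y).
Proof.
  induction L1 as [|x L1 IH]; cbn.
  - split; [intuition auto; constructor | tauto].
  - split.
    + intros H; inversion H as [|? ? Hx H']; subst.
      apply IH in H' as (H1 & H2 & H3). rewrite Forall_forall in Hx.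
      repeat split; auto.
      * constructor; auto. apply Forall_forall. intros y Hy; apply Hx, in_or_app; auto.
      * intros a b [<-|Ha] Hb; [apply Hx, in_or_app|]; auto.
    + intros (H1 & H2 & H3). inversion H1 as [|? ? Hx H1']; subst.
      constructor; [|apply IH; auto].
      rewrite Forall_forall in *. intros y Hy. apply in_app_or in Hy as [Hy|Hy]; auto.
Qed.

Lemma ForallOrdPairs_filter {A} (R : A -> A -> Prop) f L :
  ForallOrdPairs R L -> ForallOrdPairs R (filter f L).
Proof.
  induction 1 as [|x L Hx HL IH]; cbn; [constructor|].
  destruct (f x); auto. constructor; auto.
  rewrite Forall_forall in *. intros y Hy. apply filter_In in Hy as [Hy _]; auto.
Qed.

Lemma NoDup_app_notin {A} (l1 l2 : list A) a : NoDup (l1 ++ l2) -> In a l1 -> ~ In a l2.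
Proof.
  induction l1 as [|x l1 IH]; cbn; [tauto|].
  intros Hn [<-|Ha]; inversion Hn as [|? ? Hx Hn']; subst.
  - intro C; apply Hx, in_or_app; auto.
  - auto.
Qed.

(* How the control point of operation [k] in [AbsQ] is matched in [AbsQ0], given
   whether [k] occurs in the linearization list ([inL]), whether it is still in [O]
   ([o]) and its label [v].  A pending enqueue is either not yet linearized (still
   in [O] but not in the list) or already linearized: then it is in the list or
   has been dequeued. *)
Definition cp_rel (c qc : option cpc) (qi : option val) (inL : Prop) (o : bool) (v : val) : Prop :=
  match c with
  | None => qc = None /\ qi = None
  | Some A1 => qi = Some v /\ ((qc = Some A1 /\ o = true /\ ~ inL) \/ (qc = Some A /\ (o = false \/ inL)))
  | Some A2 => qi = Some v /\ qc = Some A2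
  | Some A => False
  | Some R1 => qi = None /\ qc = Some R1
  | Some R2 => qi = None /\ qc = Some R2
  | Some R3 => qi = None /\ qc = Some R3
  end.

Lemma cp_rel_iff c qc qi P P' o v : (P <-> P') -> cp_rel c qc qi P o v -> cp_rel c qc qi P' o v.
Proof. intros E; destruct c as [[]|]; cbn; tauto. Qed.

(* [L] lists the enqueues of [O] that [q] has linearized, newest first, as the
   queue [qsig q] does. *)
Record lin_order (u : astate) (q : qstate) (L : list nat) : Prop := {
  lo_sig : qsig q = map (fun k => fst (alab u k)) L;
  lo_nodup : NoDup L;
  lo_in_O : forall k, In k L -> aO u k = true;
  lo_comp : forall k, aO u k = true -> snd (alab u k) = COMP -> In k L;
  lo_order : ForallOrdPairs (fun a b => ~ alt u a b) L;
  lo_rv : forall k, qrv q k = arv u k;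
  lo_cp : forall k, cp_rel (acp u k) (qcp q k) (qin q k) (In k L) (aO u k) (fst (alab u k))
}.

Definition queue_rel (u : astate) (q : qstate) : Prop := exists L, lin_order u q L.

Lemma queue_rel_init : queue_rel ainit qinit.
Proof. exists []; constructor; cbn; auto; try constructor; discriminate. Qed.

Lemma queue_rel_init_unique q : queue_rel ainit q -> q = qinit.
Proof.
  intros [L [Hs _ HinO _ _ Hrv Hcp]]. cbn in *.
  assert (L = []) by (destruct L as [|x L]; auto; specialize (HinO x (or_introl eq_refl)); discriminate).
  subst. destruct q as [s i rv cp]; cbn in *. subst. unfold qinit. f_equal;
  apply functional_extensionality; intros k; auto; apply (Hcp k).
Qed.

Lemma queue_rel_total_enq_return u k u' q : abs_inv u -> astep u (RetEnq k) u' -> queue_rel u q ->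
  exists q', queue_rel u' q'.
Proof.
  intros [H1 H2] Hs [L [Hsig Hnd HinO HCOMP Hok Hrv Hcp]].
  inversion Hs as [| O lt lab rv cp k0 Hck | | | |]; subst; cbn in *.
  assert (Hf : forall y, fst (upd lab k (fst (lab k), COMP) y) = fst (lab y)).
  { intros y; unfold upd; destruct (Nat.eqb_spec y k); subst; auto. }
  assert (Hik : qin q k = Some (fst (lab k))) by (specialize (Hcp k); rewrite Hck in Hcp; apply Hcp).
  destruct (O k) eqn:HOk; [destruct (in_dec Nat.eq_dec k L) as [HkL|HkL]|].
  - exists {| qsig := qsig q; qin := qin q; qrv := qrv q; qcp := upd (qcp q) k (Some A2) |}.
    exists L; constructor; cbn; auto.
    + rewrite Hsig. apply map_ext. intros y. rewrite Hf. auto.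
    + intros y Hy HC. destruct (Nat.eq_dec y k) as [->|Hyk]; auto.
      rewrite upd_neq in HC by auto. auto.
    + intros y. destruct (Nat.eq_dec y k) as [->|Hyk].
      * rewrite !upd_eq. cbn. auto.
      * rewrite !upd_neq by auto. auto.
  - (* an enqueue that returns before being linearized is linearized now, as the newest element *)
    exists {| qsig := map (fun y => fst (lab y)) (k :: L); qin := qin q; qrv := qrv q;
              qcp := upd (qcp q) k (Some A2) |}.
    exists (k :: L); constructor; cbn; auto.
    + f_equal; [rewrite upd_eq; auto|]. apply map_ext. intros y. rewrite Hf. auto.
    + constructor; auto.
    + intros y [<-|Hy]; auto.
    + intros y Hy HC. destruct (Nat.eq_dec y k) as [->|Hyk]; auto.
      right. rewrite upd_neq in HC by auto. auto.
    + constructor; auto. apply Forall_forall. intros y Hy C. destruct (H2 k y C) as (_ & _ & Hc).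
      destruct (H1 k HOk) as [[C1 C2]|[C1 C2]]; congruence.
    + intros y. destruct (Nat.eq_dec y k) as [->|Hyk].
      * rewrite !upd_eq. cbn. auto.
      * rewrite !upd_neq by auto.
        apply (cp_rel_iff _ _ _ (In y L)); [|auto]. split; [auto|intros [C|C]; [congruence|auto]].
  - exists {| qsig := qsig q; qin := qin q; qrv := qrv q; qcp := upd (qcp q) k (Some A2) |}.
    exists L; constructor; cbn; auto.
    intros y. destruct (Nat.eq_dec y k) as [->|Hyk].
    + rewrite !upd_eq. cbn. auto.
    + rewrite !upd_neq by auto. auto.
Qed.

Lemma queue_rel_total_lin_deq u d k u' q : abs_inv u -> astep u (LinDeq d k) u' -> d <> EMPTY ->
  queue_rel u q -> exists q', queue_rel u' q'.
Proof.
  intros [H1 H2] Hs Hd [L [Hsig Hnd HinO HCOMP Hok Hrv Hcp]].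
  inversion Hs; subst; cbn in *; [|congruence].
  match goal with Hx : O k' = true |- _ => rename Hx into HOk' end.
  match goal with Hx : cp k = Some R1 |- _ => rename Hx into Hck end.
  assert (Hkk : k <> k') by (intro; subst; destruct (H1 k' HOk') as [[C _]|[C _]]; congruence).
  set (L' := filter (fun y => negb (Nat.eqb y k')) L).
  assert (HL' : forall y, In y L' <-> In y L /\ y <> k').
  { intros y; unfold L'; rewrite filter_In.
    destruct (Nat.eqb_spec y k'); cbn; intuition (auto; discriminate). }
  exists {| qsig := map (fun y => fst (lab y)) L'; qin := qin q; qrv := upd rv k (Some (fst (lab k')));
            qcp := fun y => if Nat.eqb y k then Some R2 else if Nat.eqb y k' then
                     (match qcp q y with Some A1 => Some A | c => c end) else qcp q y |}.
  exists L'; constructor; cbn; auto.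
  - apply NoDup_filter; auto.
  - intros y Hy. apply HL' in Hy as [Hy Hyk]. rewrite upd_neq; auto.
  - intros y. unfold upd. destruct (Nat.eqb_spec y k'); [discriminate|]. intros Hy HC. apply HL'; auto.
  - apply (ForallOrdPairs_impl_in (fun a b => ~ lt a b)); [intros x y _ _ Hn [Hxy _]; auto|].
    apply ForallOrdPairs_filter; auto.
  - intros y. destruct (Nat.eq_dec y k) as [->|Hyk].
    + rewrite !upd_eq, Nat.eqb_refl. specialize (Hcp k). rewrite Hck in Hcp. cbn in *.
      split; [|auto]. apply Hcp.
    + rewrite !upd_neq by auto. destruct (Nat.eqb_spec y k) as [|_]; [contradiction|].
      destruct (Nat.eqb_spec y k') as [->|Hyk'].
      * rewrite upd_eq. specialize (Hcp k').
        destruct (H1 k' HOk') as [[C _]|[C _]]; rewrite C in *; cbn in *.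
        -- destruct Hcp as [Hi [(-> & _)|(-> & _)]]; split; auto.
        -- destruct Hcp as [Hi ->]. auto.
      * rewrite upd_neq by auto. apply (cp_rel_iff _ _ _ (In y L)); [|auto].
        rewrite HL'. tauto.
Qed.

Ltac cp_rel_at_k Hcp Hk k :=
  let y := fresh "y" in let Hyk := fresh "Hyk" in
  intros y; destruct (Nat.eq_dec y k) as [->|Hyk];
  [ rewrite !upd_eq; specialize (Hcp k); cbn in *; rewrite Hk in Hcp; cbn in *;
    split; [|auto]; apply Hcp
  | rewrite !upd_neq by exact Hyk; auto ].

Lemma queue_rel_total u l u' q : abs_inv u -> astep u l u' -> queue_rel u q -> exists q', queue_rel u' q'.
Proof.
  intros Hu Hs Hq.
  inversion Hs as [O lt lab rv cp d k Hk Hd | | O lt lab rv cp k Hk | | O lt lab rv cp k Hk Hall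
    | O lt lab rv cp d k Hk Hrvk]; subst.
  - destruct Hu as [H1 _]. destruct Hq as [L [Hsig Hnd HinO HCOMP Hok Hrv Hcp]]. cbn in *.
    assert (HOk : O k = false)
      by (destruct (O k) eqn:E; auto; destruct (H1 k E) as [[C _]|[C _]]; congruence).
    assert (HkL : ~ In k L) by (intro C; specialize (HinO k C); congruence).
    exists {| qsig := qsig q; qin := upd (qin q) k (Some d); qrv := qrv q;
              qcp := upd (qcp q) k (Some A1) |}.
    exists L; constructor; cbn; auto.
    + rewrite Hsig. apply map_ext_in. intros y Hy. rewrite upd_neq; auto. intro; subst; auto.
    + intros y Hy. rewrite upd_neq by (intro; subst; auto). auto.
    + intros y. unfold upd. destruct (Nat.eqb_spec y k) as [->|]; [intros _; discriminate|]. auto.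
    + apply (ForallOrdPairs_impl_in (fun a b => ~ lt a b)); auto.
      intros x y _ Hy Hn [Hxy|(-> & _)]; [auto | contradiction].
    + intros y. destruct (Nat.eq_dec y k) as [->|Hyk].
      * rewrite !upd_eq. cbn. split; auto.
      * rewrite !upd_neq by auto. auto.
  - eapply queue_rel_total_enq_return; eauto.
  - destruct Hq as [L [Hsig Hnd HinO HCOMP Hok Hrv Hcp]].
    exists {| qsig := qsig q; qin := qin q; qrv := qrv q; qcp := upd (qcp q) k (Some R1) |}.
    exists L; constructor; cbn; auto. cp_rel_at_k Hcp Hk k.
  - eapply queue_rel_total_lin_deq; eauto.
  - destruct Hq as [L [Hsig Hnd HinO HCOMP Hok Hrv Hcp]].
    exists {| qsig := qsig q; qin := qin q; qrv := upd rv k (Some EMPTY); qcp := upd (qcp q) k (Some R2) |}.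
    exists L; constructor; cbn; auto. cp_rel_at_k Hcp Hk k.
  - destruct Hq as [L [Hsig Hnd HinO HCOMP Hok Hrv Hcp]].
    exists {| qsig := qsig q; qin := qin q; qrv := qrv q; qcp := upd (qcp q) k (Some R3) |}.
    exists L; constructor; cbn; auto. cp_rel_at_k Hcp Hk k.
Qed.

Lemma steps_one_eq (L : LTS) s l s1 s2 : step L s l s1 -> s1 = s2 -> steps L s [l] s2.
Proof. intros H <-. apply steps_one, H. Qed.

Ltac upd_ext :=
  f_equal; apply functional_extensionality; intros ?y; unfold upd;
  repeat match goal with |- context [Nat.eqb ?a ?b] => destruct (Nat.eqb_spec a b); subst end;
  auto; try congruence.

Lemma replay_lin_enq (f : nat -> val) W s i rv cp : NoDup W ->
  (forall x, In x W -> cp x = Some A /\ i x = Some (f x)) ->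
  steps AbsQ0 {| qsig := s; qin := i; qrv := rv;
                 qcp := fun y => if in_dec Nat.eq_dec y W then Some A1 else cp y |}
    (map (fun x => LinEnq (f x) x) (rev W))
    {| qsig := map f W ++ s; qin := i; qrv := rv; qcp := cp |}.
Proof.
  revert cp. induction W as [|x W IH]; intros cp Hnd HW; [constructor|].
  inversion Hnd as [|? ? Hx Hnd']; subst. destruct (HW x (or_introl eq_refl)) as [Hcx Hix].
  change (rev (x :: W)) with (rev W ++ [x]). rewrite map_app. eapply steps_app.
  - replace (fun y => if in_dec Nat.eq_dec y (x :: W) then Some A1 else cp y)
      with (fun y => if in_dec Nat.eq_dec y W then Some A1 else upd cp x (Some A1) y).
    + apply IH; auto. intros y Hy. rewrite upd_neq by (intro; subst; auto). apply HW; right; auto.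
    + apply functional_extensionality; intros y; cbv beta.
      destruct (in_dec Nat.eq_dec y W), (in_dec Nat.eq_dec y (x :: W)) as [Hy|Hy]; cbn in *;
        auto; unfold upd; destruct (Nat.eqb_spec y x); subst; intuition congruence.
  - apply steps_one_eq with
      {| qsig := f x :: map f W ++ s; qin := i; qrv := rv; qcp := upd (upd cp x (Some A1)) x (Some A) |}.
    + apply q_lin_enq; [apply upd_eq | auto].
    + upd_ext.
Qed.

Lemma filter_Gamma_lin_enq f W : filter GammaCRL (map (fun x => LinEnq (f x) x) W) = [].
Proof. induction W; cbn; auto. Qed.

Definition queue_rel_pred (u : astate) (l : label) (q' : qstate) : Prop :=
  exists q w, queue_rel u q /\ steps AbsQ0 q w q' /\ filter GammaCRL w = filter GammaCRL [l].

(* In [q'] the new enqueue [k] was linearized after its invocation; the enqueues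
   [P] linearized after [k] are all pending (a completed one would be ordered
   below [k]), so they can be un-linearized too and replayed after [k]. *)
Lemma queue_rel_back_enq_call_linearized O lt lab rv cp d k P S s' i' rv' cp' :
  abs_inv {| aO := O; alt := lt; alab := lab; arv := rv; acp := cp |} ->
  cp k = None -> d <> EMPTY ->
  lin_order {| aO := upd O k true;
               alt := fun a b => lt a b \/ (b = k /\ O a = true /\ snd (lab a) = COMP);
               alab := upd lab k (d, PEND); arv := rv; acp := upd cp k (Some A1) |}
            {| qsig := s'; qin := i'; qrv := rv'; qcp := cp' |} (P ++ k :: S) ->
  i' k = Some d -> cp' k = Some A ->
  queue_rel_pred {| aO := O; alt := lt; alab := lab; arv := rv; acp := cp |} (InvEnq d k)
    {| qsig := s'; qin := i'; qrv := rv'; qcp := cp' |}.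
Proof.
  intros [H1 H2] Hck Hd [Hsig Hnd HinO HCOMP Hok Hrv Hcp] Hik Hck'. cbn in *.
  assert (HOk : O k = false)
    by (destruct (O k) eqn:E; auto; destruct (H1 k E) as [[C _]|[C _]]; congruence).
  assert (HkP : ~ In k P) by (intro C; apply (NoDup_remove_2 _ _ _ Hnd), in_or_app; auto).
  assert (HkS : ~ In k S) by (intro C; apply (NoDup_remove_2 _ _ _ Hnd), in_or_app; auto).
  assert (HndPS := NoDup_remove_1 _ _ _ Hnd).
  assert (HPS : forall x, In x P -> ~ In x S) by (intros x Hx; apply (NoDup_app_notin P S); auto).
  assert (HP : forall x, In x P -> x <> k /\ O x = true /\ cp x = Some A1).
  { intros x Hx. assert (Hxk : x <> k) by (intro; subst; auto).
    assert (HOx : O x = true)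
      by (specialize (HinO x (in_or_app _ _ _ (or_introl Hx))); rewrite upd_neq in HinO; auto).
    destruct (H1 x HOx) as [[C1 C2]|[C1 C2]]; [repeat split; auto|].
    exfalso. apply ForallOrdPairs_app_iff in Hok as (_ & _ & Hx').
    apply (Hx' x k Hx (or_introl eq_refl)). right. auto. }
  assert (HiP : forall x, In x P -> i' x = Some (fst (lab x)) /\ cp' x = Some A).
  { intros x Hx. destruct (HP x Hx) as (Hxk & HOx & Hcx). specialize (Hcp x).
    rewrite !upd_neq in Hcp by auto. rewrite Hcx in Hcp. cbn in Hcp.
    destruct Hcp as [Hi [(_ & _ & C)|(Hc & _)]]; [exfalso; apply C; apply in_or_app; auto|auto]. }
  exists {| qsig := map (fun y => fst (lab y)) S; qin := upd i' k None; qrv := rv';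
            qcp := upd (fun y => if in_dec Nat.eq_dec y P then Some A1 else cp' y) k None |},
         ([InvEnq d k; LinEnq d k] ++ map (fun x => LinEnq (fst (lab x)) x) (rev P)).
  split; [|split; [|rewrite filter_app, filter_Gamma_lin_enq; reflexivity]].
  - exists S; constructor; cbn; auto.
    + apply (NoDup_app_remove_l _ _ HndPS).
    + intros y Hy. assert (y <> k) by (intro; subst; auto).
      specialize (HinO y (in_or_app _ _ _ (or_intror (in_cons k y S Hy)))).
      rewrite upd_neq in HinO; auto.
    + intros y Hy HC. assert (Hyk : y <> k) by congruence.
      specialize (HCOMP y). rewrite !upd_neq in HCOMP by auto.
      apply in_app_or in HCOMP as [C|[C|C]]; auto.
      * destruct (HP y C) as (_ & _ & C2). destruct (H1 y Hy) as [[_ C3]|[C3 _]]; congruence.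
      * congruence.
    + apply ForallOrdPairs_app_iff in Hok as (_ & Hok & _). inversion Hok as [|? ? _ Hok']; subst.
      apply (ForallOrdPairs_impl_in _ _ _ (fun x y _ _ Hn H => Hn (or_introl H)) Hok').
    + intros y; destruct (Nat.eq_dec y k) as [->|Hyk].
      * rewrite Hck, !upd_eq. cbn. auto.
      * rewrite !upd_neq by auto. destruct (in_dec Nat.eq_dec y P) as [HyP|HyP].
        -- destruct (HP y HyP) as (_ & HOy & Hcy). destruct (HiP y HyP) as [Hiy _].
           rewrite Hcy. cbn. split; auto.
        -- specialize (Hcp y). rewrite !upd_neq in Hcp by auto.
           apply (cp_rel_iff _ _ _ (In y (P ++ k :: S))); auto.
           split; [intros C; apply in_app_or in C as [C|[C|C]]; auto; congruence
                  | intros; apply in_or_app; right; right; auto].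
  - apply (steps_app AbsQ0 _ _ {| qsig := d :: map (fun y => fst (lab y)) S; qin := i'; qrv := rv';
                            qcp := fun y => if in_dec Nat.eq_dec y P then Some A1 else cp' y |}).
    + econstructor; [apply q_inv_enq; [apply upd_eq | auto]|].
      eapply steps_one_eq; [apply q_lin_enq; apply upd_eq|].
      f_equal; apply functional_extensionality; intros y; unfold upd;
        destruct (Nat.eqb_spec y k) as [->|]; auto.
      destruct (in_dec Nat.eq_dec k P); [contradiction | auto].
    + replace s' with (map (fun y => fst (lab y)) P ++ d :: map (fun y => fst (lab y)) S).
      * apply replay_lin_enq; [apply (NoDup_app_remove_r _ _ HndPS)|].
        intros x Hx. destruct (HiP x Hx); auto.
      * rewrite Hsig, map_app. cbn. rewrite upd_eq. f_equal; [|f_equal];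
          apply map_ext_in; intros y Hy; rewrite upd_neq; auto; intro; subst; auto.
Qed.

Lemma queue_rel_back_enq_call u d k u' q' : abs_inv u -> astep u (InvEnq d k) u' -> queue_rel u' q' ->
  queue_rel_pred u (InvEnq d k) q'.
Proof.
  intros Hu Hs [L' HL']. inversion Hs as [O lt lab rv cp d0 k0 Hck Hd | | | | |]; subst.
  destruct q' as [s' i' rv' cp'].
  pose proof (lo_cp _ _ _ HL' k) as Hk. cbn in Hk. rewrite !upd_eq in Hk. cbn in Hk.
  destruct Hk as [Hik [(Hck' & _ & HkL) | (Hck' & [C|HkL])]]; [| discriminate | ].
  - destruct Hu as [H1 _]. destruct HL' as [Hsig Hnd HinO HCOMP Hok Hrv Hcp]. cbn in *.
    exists {| qsig := s'; qin := upd i' k None; qrv := rv'; qcp := upd cp' k None |}, [InvEnq d k].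
    split; [|split; [|reflexivity]].
    + exists L'; constructor; cbn; auto.
      * rewrite Hsig. apply map_ext_in. intros y Hy. rewrite upd_neq; auto. intro; subst; auto.
      * intros y Hy. specialize (HinO y Hy). rewrite upd_neq in HinO; auto. intro; subst; auto.
      * intros y Hy HC. assert (y <> k) by (intro; subst; destruct (H1 k Hy) as [[C _]|[C _]]; congruence).
        apply HCOMP; rewrite upd_neq by auto; auto.
      * apply (ForallOrdPairs_impl_in _ _ _ (fun x y _ _ Hn H => Hn (or_introl H)) Hok).
      * intros y; destruct (Nat.eq_dec y k) as [->|Hyk].
        -- rewrite Hck, !upd_eq. cbn. auto.
        -- specialize (Hcp y). rewrite !upd_neq in * by auto. auto.
    + eapply steps_one_eq; [apply q_inv_enq; [apply upd_eq | auto] |]. upd_ext.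
  - destruct (in_split _ _ HkL) as (P & S & ->).
    eapply queue_rel_back_enq_call_linearized; eauto.
Qed.

Lemma queue_rel_back_enq_return u k u' q' : abs_inv u -> astep u (RetEnq k) u' -> queue_rel u' q' ->
  queue_rel_pred u (RetEnq k) q'.
Proof.
  intros [H1 H2] Hs [L' [Hsig Hnd HinO HCOMP Hok Hrv Hcp]].
  inversion Hs as [| O lt lab rv cp k0 Hck | | | |]; subst. destruct q' as [s' i' rv' cp']. cbn in *.
  pose proof (Hcp k) as Hk. rewrite !upd_eq in Hk. cbn in Hk. destruct Hk as [Hik Hck'].
  assert (Hf : forall y, fst ((if O k then upd lab k (fst (lab k), COMP) else lab) y) = fst (lab y)).
  { intros y; destruct (O k); auto. unfold upd; destruct (Nat.eqb_spec y k); subst; auto. }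
  exists {| qsig := s'; qin := i'; qrv := rv'; qcp := upd cp' k (Some A) |}, [RetEnq k].
  split; [|split; [|reflexivity]].
  - exists L'; constructor; cbn; auto.
    + rewrite Hsig. apply map_ext. intros y. apply Hf.
    + intros y Hy HC. destruct (Nat.eq_dec y k) as [->|Hyk].
      * destruct (H1 k Hy) as [[_ C]|[C _]]; congruence.
      * apply HCOMP; auto. destruct (O k); auto. rewrite upd_neq; auto.
    + intros y; destruct (Nat.eq_dec y k) as [->|Hyk].
      * rewrite Hck, upd_eq. cbn. rewrite Hik, Hf. split; auto. right; split; auto.
        destruct (O k) eqn:HOk; auto. right. apply HCOMP; auto. rewrite upd_eq; auto.
      * specialize (Hcp y). rewrite !upd_neq in * by auto. rewrite Hf in Hcp. auto.
  - eapply steps_one_eq; [apply q_ret_enq; apply upd_eq |]. upd_ext.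
Qed.

Lemma queue_rel_back_deq_call u k u' q' : astep u (InvDeq k) u' -> queue_rel u' q' ->
  queue_rel_pred u (InvDeq k) q'.
Proof.
  intros Hs [L' [Hsig Hnd HinO HCOMP Hok Hrv Hcp]].
  inversion Hs as [| | O lt lab rv cp k0 Hck | | |]; subst. destruct q' as [s' i' rv' cp']. cbn in *.
  pose proof (Hcp k) as Hk. rewrite !upd_eq in Hk. cbn in Hk. destruct Hk as [Hik Hck'].
  exists {| qsig := s'; qin := i'; qrv := rv'; qcp := upd cp' k None |}, [InvDeq k].
  split; [|split; [|reflexivity]].
  - exists L'; constructor; cbn; auto.
    intros y; destruct (Nat.eq_dec y k) as [->|Hyk].
    + rewrite Hck, upd_eq. cbn. auto.
    + specialize (Hcp y). rewrite !upd_neq in * by auto. auto.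
  - eapply steps_one_eq; [apply q_inv_deq; apply upd_eq |]. upd_ext.
Qed.

Lemma queue_rel_back_deq_return u d k u' q' : astep u (RetDeq d k) u' -> queue_rel u' q' ->
  queue_rel_pred u (RetDeq d k) q'.
Proof.
  intros Hs [L' [Hsig Hnd HinO HCOMP Hok Hrv Hcp]].
  inversion Hs as [| | | | | O lt lab rv cp d0 k0 Hck Hrvk]; subst. destruct q' as [s' i' rv' cp'].
  cbn in *. pose proof (Hcp k) as Hk. rewrite !upd_eq in Hk. cbn in Hk. destruct Hk as [Hik Hck'].
  exists {| qsig := s'; qin := i'; qrv := rv'; qcp := upd cp' k (Some R2) |}, [RetDeq d k].
  split; [|split; [|reflexivity]].
  - exists L'; constructor; cbn; auto.
    intros y; destruct (Nat.eq_dec y k) as [->|Hyk].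
    + rewrite Hck, upd_eq. cbn. auto.
    + specialize (Hcp y). rewrite !upd_neq in * by auto. auto.
  - eapply steps_one_eq; [apply q_ret_deq; [apply upd_eq | rewrite Hrv; auto] |]. upd_ext.
Qed.

Lemma queue_rel_back_lin_deq O lt lab rv cp d k k' q' :
  abs_inv {| aO := O; alt := lt; alab := lab; arv := rv; acp := cp |} ->
  cp k = Some R1 -> O k' = true -> (forall o, O o = true -> ~ lt o k') -> fst (lab k') = d ->
  queue_rel {| aO := upd O k' false; alt := fun a b => lt a b /\ a <> k' /\ b <> k';
               alab := lab; arv := upd rv k (Some d); acp := upd cp k (Some R2) |} q' ->
  queue_rel_pred {| aO := O; alt := lt; alab := lab; arv := rv; acp := cp |} (LinDeq d k) q'.
Proof.
  intros [H1 H2] Hck HOk' Hmin <- [L' [Hsig Hnd HinO HCOMP Hok Hrv Hcp]].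
  destruct q' as [s' i' rv' cp']. cbn in *.
  assert (Hkk : k <> k') by (intro; subst; destruct (H1 k' HOk') as [[C _]|[C _]]; congruence).
  assert (Hk'L : ~ In k' L') by (intro C; specialize (HinO k' C); rewrite upd_eq in HinO; discriminate).
  pose proof (Hcp k) as Hk. rewrite !upd_eq in Hk. cbn in Hk. destruct Hk as [Hik Hck'].
  exists {| qsig := s' ++ [fst (lab k')]; qin := i'; qrv := rv; qcp := upd cp' k (Some R1) |},
         [LinDeq (fst (lab k')) k].
  split; [|split; [|reflexivity]].
  - exists (L' ++ [k']); constructor; cbn; auto.
    + rewrite Hsig, map_app. reflexivity.
    + apply NoDup_app; auto. repeat constructor; auto. intros a Ha [<-|[]]; auto.
    + intros y Hy. apply in_app_or in Hy as [Hy|[<-|[]]]; auto.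
      specialize (HinO y Hy). assert (y <> k') by (intro; subst; auto). rewrite upd_neq in HinO; auto.
    + intros y Hy HC. destruct (Nat.eq_dec y k') as [->|Hyk']; [apply in_or_app; right; left; auto|].
      apply in_or_app; left. apply HCOMP; auto. rewrite upd_neq; auto.
    + apply ForallOrdPairs_app_iff. split; [|split].
      * apply (ForallOrdPairs_impl_in (fun a b => ~ (lt a b /\ a <> k' /\ b <> k'))); auto.
        intros x y Hx Hy Hn Hxy. apply Hn. repeat split; auto; intro; subst; auto.
      * repeat constructor.
      * intros x y Hx [<-|[]]. apply Hmin. specialize (HinO x Hx).
        rewrite upd_neq in HinO; auto. intro; subst; auto.
    + intros y; destruct (Nat.eq_dec y k) as [->|Hyk].
      * rewrite Hck, upd_eq. cbn. auto.
      * specialize (Hcp y). rewrite !upd_neq in * by auto.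
        destruct (Nat.eq_dec y k') as [->|Hyk'].
        -- rewrite upd_eq in Hcp. destruct (H1 k' HOk') as [[C _]|[C _]]; rewrite C in *; cbn in *.
           ++ destruct Hcp as [Hi [(_ & C2 & _)|(Hc & _)]]; [discriminate|]. split; auto.
              right; split; auto. right; apply in_or_app; right; left; auto.
           ++ auto.
        -- rewrite upd_neq in Hcp by auto. apply (cp_rel_iff _ _ _ (In y L')); auto.
           split; [intros; apply in_or_app; auto
                  | intros C; apply in_app_or in C as [C|[C|[]]]; auto; congruence].
  - eapply steps_one_eq; [apply q_lin_deq; apply upd_eq |].
    f_equal; apply functional_extensionality; intros y; [rewrite Hrv; auto|].
    unfold upd; destruct (Nat.eqb_spec y k); subst; auto.
Qed.

(* Everything left in [O] is pending, so all enqueues linearized in [q'] can be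
   un-linearized and replayed after the empty dequeue. *)
Lemma queue_rel_back_lin_deq_empty u k u' q' : abs_inv u -> astep u (LinDeq EMPTY k) u' ->
  queue_rel u' q' -> queue_rel_pred u (LinDeq EMPTY k) q'.
Proof.
  intros [H1 H2] Hs [L' [Hsig Hnd HinO HCOMP Hok Hrv Hcp]].
  inversion Hs as [| | | O lt lab rv cp d k0 k' Hck Hd | O lt lab rv cp k0 Hck Hall |]; subst;
    [congruence|].
  destruct q' as [s' i' rv' cp']. cbn in *.
  pose proof (Hcp k) as Hk. rewrite !upd_eq in Hk. cbn in Hk. destruct Hk as [Hik Hck'].
  assert (HL : forall x, In x L' ->
            x <> k /\ O x = true /\ cp x = Some A1 /\ i' x = Some (fst (lab x)) /\ cp' x = Some A).
  { intros x Hx. specialize (HinO x Hx).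
    destruct (H1 x HinO) as [[C1 C2]|[C1 C2]]; [|specialize (Hall x HinO); congruence].
    assert (Hxk : x <> k) by congruence. specialize (Hcp x). rewrite upd_neq, C1 in Hcp by auto.
    cbn in Hcp. destruct Hcp as [Hi [(_ & _ & C)|(Hc & _)]]; [contradiction|]. repeat split; auto. }
  assert (HkL : ~ In k L') by (intro C; destruct (HL k C); auto).
  exists {| qsig := []; qin := i'; qrv := rv;
            qcp := upd (fun y => if in_dec Nat.eq_dec y L' then Some A1 else cp' y) k (Some R1) |},
         ([LinDeq EMPTY k] ++ map (fun x => LinEnq (fst (lab x)) x) (rev L')).
  split; [|split; [|rewrite filter_app, filter_Gamma_lin_enq; reflexivity]].
  - exists []; constructor; cbn; auto; try constructor; try tauto.
    + intros y Hy HC. specialize (Hall y Hy). congruence.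
    + intros y; destruct (Nat.eq_dec y k) as [->|Hyk].
      * rewrite Hck, upd_eq. cbn. auto.
      * rewrite upd_neq by auto. destruct (in_dec Nat.eq_dec y L') as [HyL|HyL].
        -- destruct (HL y HyL) as (_ & HOy & Hcy & Hiy & _). rewrite Hcy. cbn. split; auto.
        -- specialize (Hcp y). rewrite !upd_neq in Hcp by auto.
           apply (cp_rel_iff _ _ _ (In y L')); auto. tauto.
  - apply (steps_app AbsQ0 _ _ {| qsig := []; qin := i'; qrv := rv';
             qcp := fun y => if in_dec Nat.eq_dec y L' then Some A1 else cp' y |}).
    + eapply steps_one_eq; [apply q_lin_deq_empty; apply upd_eq|].
      f_equal; apply functional_extensionality; intros y; [rewrite Hrv; auto|].
      unfold upd; destruct (Nat.eqb_spec y k) as [->|]; auto.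
      destruct (in_dec Nat.eq_dec k L'); [contradiction | auto].
    + replace s' with (map (fun y => fst (lab y)) L' ++ []) by (rewrite app_nil_r; auto).
      apply replay_lin_enq; auto. intros x Hx. destruct (HL x Hx) as (_ & _ & _ & ? & ?); auto.
Qed.

Lemma queue_rel_back u l u' q' : abs_inv u -> astep u l u' -> queue_rel u' q' -> queue_rel_pred u l q'.
Proof.
  intros Hu Hs Hq'. destruct l as [d k | k | k | d k | d k | d k |].
  - eapply queue_rel_back_enq_call; eauto.
  - eapply queue_rel_back_deq_call; eauto.
  - eapply queue_rel_back_enq_return; eauto.
  - eapply queue_rel_back_deq_return; eauto.
  - inversion Hs.
  - destruct d as [n|]; [|eapply queue_rel_back_lin_deq_empty; eauto].
    inversion Hs; subst. eapply queue_rel_back_lin_deq; eauto.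
  - inversion Hs.
Qed.

Lemma absq_Gamma_refines_absq0 : Gamma_refines GammaCRL AbsQ AbsQ0.
Proof.
  apply (bsim_Gamma_refines GammaCRL AbsQ AbsQ0 abs_inv queue_rel).
  - exact abs_inv_init.
  - exact abs_inv_step.
  - exact queue_rel_init.
  - exact queue_rel_init_unique.
  - exact queue_rel_total.
  - exact queue_rel_back.
Qed.

Theorem mainTheorem3 :
  (exists fs : St HWQ -> St AbsQ -> Prop, fwd_sim GammaCRL HWQ AbsQ fs) /\
  Gamma_refines GammaCRL HWQ AbsQ0 /\
  refines HWQ AbsQ0.
Proof.
  assert (Hhwq : Gamma_refines GammaCRL HWQ AbsQ0).
  { apply (Gamma_refines_trans _ _ AbsQ).
    - exact (fwd_sim_Gamma_refines _ _ _ _ hwq_abs_fwd_sim).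
    - exact absq_Gamma_refines_absq0. }
  split; [exists hwq_abs; exact hwq_abs_fwd_sim | split; [exact Hhwq|]].
  apply (Gamma_refines_refines GammaCRL); auto.
  intros l Hl; unfold GammaCRL; rewrite Hl; reflexivity.
Qed.
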